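(* Let $(G,D,\star)$ be a probabilistic metric space (not necessarily complete) where $\star$ is a continuous triangle function, and let $(a_n)\subset G$ be a Cauchy sequence. Then there exists a probabilistic $1$-Lipschitz map $f:G\to\Delta^+$ such that $D(a_n,x)\xrightarrow{w}f(x)$ as $n\to\infty$ for every $x\in G$. In particular $f(a_n)\xrightarrow{w}\mathcal H_0$ as $n\to\infty$.
   Context: A distribution function is a nondecreasing, left-continuous function $F:[-\infty,+\infty]\to[0,1]$ with $F(-\infty)=0$, $F(+\infty)=1$; $\Delta^+$ is the set of distribution functions with $F(0)=0$, ordered pointwise. $\mathcal H_0(t)=0$ for $t\le0$, $1$ for $t>0$. A triangle function is a binary operation $\star$ on $\Delta^+$ that is commutative, associative, nondecreasing in each argument, with $F\star\mathcal H_0=F$. $F_n\xrightarrow{w}F$ (weak convergence) means $F_n(t)\to F(t)$ at every continuity point $t\in\mathbb R$ of $F$; $\star$ is continuous if $F_n\star L_n\xrightarrow{w}F\star L$ whenever $F_n\xrightarrow{w}F$, $L_n\xrightarrow{w}L$. A probabilistic metric space $(G,D,\star)$ consists of a set $G$, a triangle function $\star$ and $D:G\times G\to\Delta^+$ with (i) $D(p,q)=\mathcal H_0$ iff $p=q$; (ii) $D(p,q)=D(q,p)$; (iii) $D(p,q)\star D(q,r)\le D(p,r)$. A sequence $(z_n)\subset G$ is Cauchy if $D(z_n,z_p)(t)\to\mathcal H_0(t)$ for all $t\in\mathbb R$ as $n,p\to\infty$. A map $f:G\to\Delta^+$ is probabilistic $1$-Lipschitz if $D(x,y)\star f(y)\le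 f(x)$ for all $x,y$. *)

From Stdlib Require Import Reals.
Open Scope R_scope.

(* A distribution function F : [-oo,+oo] -> [0,1] with F(-oo)=0, F(+oo)=1 is
   determined by its restriction to R (the values at -oo/+oo are fixed by
   definition), so we represent it as a function R -> R. *)
Definition dfun := R -> R.

Definition nondecreasing (F : dfun) : Prop := forall s t, s <= t -> F s <= F t.

Definition left_continuous (F : dfun) : Prop :=
  forall t eps, 0 < eps -> exists delta, 0 < delta /\
    forall s, t - delta < s < t -> Rabs (F s - F t) < eps.

Definition in_Delta_plus (F : dfun) : Prop :=
  nondecreasing F /\ left_continuous F /\ (forall t, 0 <= F t <= 1) /\ F 0 = 0.

(* pointwise order (at -oo/+oo all distribution functions agree) *)
Definition dle (F L : dfun) : Prop := forall t, F t <= L t.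

Definition H0 : dfun := fun t => if Rle_dec t 0 then 0 else 1.

Definition triangle_function (T : dfun -> dfun -> dfun) : Prop :=
  (forall F L, in_Delta_plus F -> in_Delta_plus L -> in_Delta_plus (T F L)) /\
  (forall F L, in_Delta_plus F -> in_Delta_plus L -> T F L = T L F) /\
  (forall F L M, in_Delta_plus F -> in_Delta_plus L -> in_Delta_plus M ->
      T F (T L M) = T (T F L) M) /\
  (forall F F' L, in_Delta_plus F -> in_Delta_plus F' -> in_Delta_plus L ->
      dle F F' -> dle (T F L) (T F' L)) /\
  (forall F, in_Delta_plus F -> T F H0 = F).

Definition weak_cv (Fn : nat -> dfun) (F : dfun) : Prop :=
  forall t, continuity_pt F t -> Un_cv (fun n => Fn n t) (F t).

Definition continuous_triangle (T : dfun -> dfun -> dfun) : Prop :=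
  forall (Fn Ln : nat -> dfun) (F L : dfun),
    (forall n, in_Delta_plus (Fn n)) -> (forall n, in_Delta_plus (Ln n)) ->
    in_Delta_plus F -> in_Delta_plus L ->
    weak_cv Fn F -> weak_cv Ln L ->
    weak_cv (fun n => T (Fn n) (Ln n)) (T F L).

Definition PM_space (G : Type) (D : G -> G -> dfun) (T : dfun -> dfun -> dfun) : Prop :=
  triangle_function T /\
  (forall p q, in_Delta_plus (D p q)) /\
  (forall p q, D p q = H0 <-> p = q) /\
  (forall p q, D p q = D q p) /\
  (forall p q r, dle (T (D p q) (D q r)) (D p r)).

Definition PM_Cauchy {G : Type} (D : G -> G -> dfun) (z : nat -> G) : Prop :=
  forall t eps, 0 < eps -> exists N : nat, forall n p : nat, (N <= n)%nat -> (N <= p)%nat ->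
    Rabs (D (z n) (z p) t - H0 t) < eps.

Definition prob_1_Lipschitz {G : Type} (D : G -> G -> dfun) (T : dfun -> dfun -> dfun)
  (f : G -> dfun) : Prop :=
  forall x y, dle (T (D x y) (f y)) (f x).

From Stdlib Require Import Reals Lra Lia Classical.
Open Scope R_scope.

(* The candidate limit is f x := the left-continuous lower limit of the sequence of distribution
   functions D(a_n, x).  The Cauchy property and the triangle inequality give
   D(a_m, a_n) * D(a_n, x) <= D(a_m, x) with D(a_m, a_n) close to H0; by continuity of the
   triangle function, values of D(a_n, x) that are reached infinitely often are therefore
   reached eventually at any larger argument, so at continuity points of f the lower limit is
   an actual limit.  The Lipschitz inequality D(x,y) * f(y) <= f(x) is the limit of the triangle
   inequality D(a_n,y) * D(y,x) <= D(a_n,x), first at common continuity points (which are dense,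
   by a bisection argument) and then everywhere by left-continuity. *)

Lemma continuity_pt_intro (f : R -> R) x :
  (forall eps, 0 < eps ->
     exists d, 0 < d /\ forall y, Rabs (y - x) < d -> Rabs (f y - f x) < eps) ->
  continuity_pt f x.
Proof.
  intros H eps He. destruct (H eps He) as [d [Hd Hy]]. exists d; split; [lra|].
  intros y [_ Hyd]. apply Hy, Hyd.
Qed.

Lemma continuity_pt_elim (f : R -> R) x : continuity_pt f x ->
  forall eps, 0 < eps ->
    exists d, 0 < d /\ forall y, Rabs (y - x) < d -> Rabs (f y - f x) < eps.
Proof.
  intros H eps He. destruct (H eps He) as [d [Hd Hy]]. exists d; split; [lra|].
  intros y Hyd. destruct (Req_dec y x) as [->|Hne].
  - rewrite Rminus_diag, Rabs_R0; exact He.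
  - apply (Hy y). split; [split; [exact I|auto]|exact Hyd].
Qed.

Lemma Delta_plus_nonpos F : in_Delta_plus F -> forall t, t <= 0 -> F t = 0.
Proof.
  intros [Hm [_ [Hb HF0]]] t Ht. pose proof (Hm _ _ Ht). pose proof (Hb t). lra.
Qed.

Definition step (t0 c : R) : dfun := fun s => if Rle_dec s t0 then 0 else c.

Lemma step_in_Delta_plus t0 c : 0 <= t0 -> 0 <= c <= 1 -> in_Delta_plus (step t0 c).
Proof.
  intros Ht Hc. unfold in_Delta_plus, step. repeat split.
  - intros s u Hsu. destruct (Rle_dec s t0); destruct (Rle_dec u t0); lra.
  - intros t eps He. destruct (Rle_dec t t0).
    + exists 1. split; [lra|]. intros s Hs. destruct (Rle_dec s t0); [|lra].
      rewrite Rminus_diag, Rabs_R0; lra.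
    + exists (t - t0). split; [lra|]. intros s Hs. destruct (Rle_dec s t0); [lra|].
      rewrite Rminus_diag, Rabs_R0; lra.
  - destruct (Rle_dec t t0); lra.
  - destruct (Rle_dec t t0); lra.
  - destruct (Rle_dec 0 t0); lra.
Qed.

Lemma step_continuity_pt t0 c t : t0 < t -> continuity_pt (step t0 c) t.
Proof.
  intros Ht. apply continuity_pt_intro. intros eps He. exists (t - t0). split; [lra|].
  intros y Hy. unfold step. apply Rabs_def2 in Hy.
  destruct (Rle_dec y t0); [lra|]. destruct (Rle_dec t t0); [lra|].
  rewrite Rminus_diag, Rabs_R0; lra.
Qed.

Lemma step_dle F t0 c : in_Delta_plus F -> c <= F t0 -> dle (step t0 c) F.
Proof.
  intros [Hm [_ [Hb _]]] Hc s. unfold step. destruct (Rle_dec s t0).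
  - apply Hb.
  - pose proof (Hm t0 s ltac:(lra)). lra.
Qed.

Lemma H0_in_Delta_plus : in_Delta_plus H0.
Proof. exact (step_in_Delta_plus 0 1 (Rle_refl 0) ltac:(lra)). Qed.

Lemma weak_cv_const (F : dfun) : weak_cv (fun _ => F) F.
Proof.
  intros t _ eps He. exists 0%nat. intros. unfold R_dist. rewrite Rminus_diag, Rabs_R0; lra.
Qed.

Lemma inv_succ_pos k : 0 < / (INR k + 1).
Proof. apply Rinv_0_lt_compat. pose proof (pos_INR k). lra. Qed.

Lemma inv_succ_le1 k : / (INR k + 1) <= 1.
Proof. pose proof (pos_INR k). rewrite <- Rinv_1. apply Rinv_le_contravar; lra. Qed.

Lemma inv_succ_eventually_lt eps : 0 < eps ->
  exists N, forall k, (N <= k)%nat -> / (INR k + 1) < eps.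
Proof.
  intros He. destruct (INR_archimed eps 1 He) as [N HN]. exists N. intros k Hk.
  apply le_INR in Hk. pose proof (pos_INR N).
  apply (Rmult_lt_reg_r (INR k + 1)); [lra|]. rewrite Rinv_l by lra. nra.
Qed.

Definition H0_approx (k : nat) : dfun := step (/ (INR k + 1)) (1 - / (INR k + 1)).

Lemma H0_approx_in_Delta_plus k : in_Delta_plus (H0_approx k).
Proof.
  pose proof (inv_succ_pos k); pose proof (inv_succ_le1 k). apply step_in_Delta_plus; lra.
Qed.

Lemma H0_approx_weak_cv : weak_cv H0_approx H0.
Proof.
  intros t _ eps He. unfold H0_approx, step, H0, R_dist.
  destruct (Rle_dec t 0) as [Ht0|Ht0].
  - exists 0%nat. intros n _. pose proof (inv_succ_pos n).
    destruct (Rle_dec t (/ (INR n + 1))); [|lra]. rewrite Rminus_diag, Rabs_R0; lra.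
  - destruct (inv_succ_eventually_lt (Rmin t eps)) as [N HN]; [apply Rmin_pos; lra|].
    exists N. intros n Hn. specialize (HN n Hn).
    pose proof (Rmin_l t eps); pose proof (Rmin_r t eps); pose proof (inv_succ_pos n).
    destruct (Rle_dec t (/ (INR n + 1))); [lra|]. rewrite Rabs_left1; lra.
Qed.

Lemma triangle_function_dle T F F' L L' : triangle_function T ->
  in_Delta_plus F -> in_Delta_plus F' -> in_Delta_plus L -> in_Delta_plus L' ->
  dle F F' -> dle L L' -> dle (T F L) (T F' L').
Proof.
  intros [_ [Hc [_ [Hm _]]]] HF HF' HL HL' HFF' HLL' t.
  apply (Rle_trans _ _ _ (Hm F F' L HF HF' HL HFF' t)).
  rewrite (Hc F' L HF' HL), (Hc F' L' HF' HL'). apply (Hm L L' F' HL HL' HF' HLL').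
Qed.

(* [lower_limit Dn t] is the supremum, over s < t, of liminf_n Dn n s (clipped to [0,1]):
   the left-continuous regularisation of the pointwise lower limit. *)
Definition eventual_lower_bound (Dn : nat -> dfun) (t c : R) : Prop :=
  c <= 1 /\ (c <= 0 \/ exists s, s < t /\ exists N, forall n, (N <= n)%nat -> c <= Dn n s).

Lemma eventual_lower_bound_bound Dn t : bound (eventual_lower_bound Dn t).
Proof. exists 1. intros c [H _]. exact H. Qed.

Lemma eventual_lower_bound_inhabited Dn t : exists c, eventual_lower_bound Dn t c.
Proof. exists 0. split; [lra|left; lra]. Qed.

Definition lower_limit (Dn : nat -> dfun) : dfun := fun t =>
  proj1_sig (completeness (eventual_lower_bound Dn t)
               (eventual_lower_bound_bound Dn t) (eventual_lower_bound_inhabited Dn t)).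

Section LowerLimit.
Variable Dn : nat -> dfun.

Lemma lower_limit_lub t : is_lub (eventual_lower_bound Dn t) (lower_limit Dn t).
Proof. unfold lower_limit. destruct (completeness _ _ _) as [m Hm]. exact Hm. Qed.

Lemma lower_limit_ub t c : eventual_lower_bound Dn t c -> c <= lower_limit Dn t.
Proof. apply (proj1 (lower_limit_lub t)). Qed.

Lemma lower_limit_least t M :
  (forall c, eventual_lower_bound Dn t c -> c <= M) -> lower_limit Dn t <= M.
Proof. apply (proj2 (lower_limit_lub t)). Qed.

Lemma lower_limit_approx t eps : 0 < eps ->
  exists c, eventual_lower_bound Dn t c /\ lower_limit Dn t - eps < c.
Proof.
  intros He. apply NNPP. intros Hn.
  enough (lower_limit Dn t <= lower_limit Dn t - eps) by lra.
  apply lower_limit_least. intros c Hc. apply Rnot_lt_le. intros Hlt. apply Hn. exists c; auto.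
Qed.

Lemma lower_limit_bounds t : 0 <= lower_limit Dn t <= 1.
Proof.
  split.
  - apply lower_limit_ub. split; [lra|left; lra].
  - apply lower_limit_least. intros c [H _]; exact H.
Qed.

Lemma lower_limit_nondecreasing : nondecreasing (lower_limit Dn).
Proof.
  intros s t Hst. apply lower_limit_least. intros c [H1 [H2|[u [Hu HN]]]].
  - apply lower_limit_ub. split; auto.
  - apply lower_limit_ub. split; auto. right. exists u. split; [lra|auto].
Qed.

Hypothesis HD : forall n, in_Delta_plus (Dn n).

Lemma lower_limit_eventually_gt t eps : 0 < eps ->
  exists N, forall n, (N <= n)%nat -> lower_limit Dn t - eps < Dn n t.
Proof.
  intros He. destruct (lower_limit_approx t eps He) as [c [[_ [Hc|[s [Hs [N HN]]]]] Hlt]].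
  - exists 0%nat. intros n _. destruct (HD n) as [_ [_ [Hb _]]]. specialize (Hb t). lra.
  - exists N. intros n Hn. specialize (HN n Hn). destruct (HD n) as [Hm _].
    pose proof (Hm s t ltac:(lra)). lra.
Qed.

Lemma lower_limit_in_Delta_plus : in_Delta_plus (lower_limit Dn).
Proof.
  split; [apply lower_limit_nondecreasing|].
  split; [|split; [apply lower_limit_bounds|]].
  - intros t eps He. destruct (lower_limit_approx t eps He) as [c [[Hc1 Hc] Hlt]].
    destruct Hc as [Hc|[s [Hs HN]]].
    + exists 1. split; [lra|]. intros s Hs.
      pose proof (lower_limit_nondecreasing s t ltac:(lra)).
      pose proof (lower_limit_bounds s). rewrite Rabs_left1; lra.
    + exists (t - s). split; [lra|]. intros u Hu.
      pose proof (lower_limit_nondecreasing u t ltac:(lra)).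
      assert (c <= lower_limit Dn u).
      { apply lower_limit_ub. split; auto. right. exists s. split; [lra|auto]. }
      rewrite Rabs_left1; lra.
  - apply Rle_antisym; [|apply lower_limit_bounds]. apply lower_limit_least.
    intros c [_ [Hc|[s [Hs [N HN]]]]]; [exact Hc|].
    specialize (HN N (Nat.le_refl N)). rewrite (Delta_plus_nonpos _ (HD N) s) in HN; lra.
Qed.

End LowerLimit.

Definition T_Cauchy (T : dfun -> dfun -> dfun) (Dn : nat -> dfun) : Prop :=
  forall d, 0 < d <= 1 -> exists N, forall m n, (N <= m)%nat -> (N <= n)%nat ->
    dle (T (step d (1 - d)) (Dn n)) (Dn m).

Section TCauchyLimit.
Variable T : dfun -> dfun -> dfun.
Hypothesis HT : triangle_function T.
Hypothesis HTcont : continuous_triangle T.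
Variable Dn : nat -> dfun.
Hypothesis HD : forall n, in_Delta_plus (Dn n).
Hypothesis HDcauchy : T_Cauchy T Dn.

(* T (H0_approx k) (step t0 c) tends to T H0 (step t0 c) = step t0 c at t, and
   T (H0_approx k) (step t0 c) <= T (H0_approx k) (Dn n) <= Dn m whenever c <= Dn n t0. *)
Lemma frequently_ge_eventually_gt t0 t c eps : 0 <= t0 < t -> 0 <= c <= 1 -> 0 < eps ->
  (forall N, exists n, (N <= n)%nat /\ c <= Dn n t0) ->
  exists N, forall m, (N <= m)%nat -> c - eps < Dn m t.
Proof.
  intros Ht Hc He Hfreq.
  set (S := step t0 c). assert (HS : in_Delta_plus S) by (apply step_in_Delta_plus; lra).
  pose proof HT as [_ [Tcomm [_ [_ Tid]]]].
  pose proof (HTcont H0_approx (fun _ => S) H0 S H0_approx_in_Delta_plus (fun _ => HS)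
                H0_in_Delta_plus HS H0_approx_weak_cv (weak_cv_const S)) as HcvS.
  rewrite (Tcomm H0 S H0_in_Delta_plus HS), (Tid S HS) in HcvS.
  destruct (HcvS t (step_continuity_pt t0 c t ltac:(lra)) eps He) as [k Hk].
  specialize (Hk k (Nat.le_refl k)). unfold R_dist in Hk. apply Rabs_def2 in Hk.
  assert (St : S t = c) by (unfold S, step; destruct (Rle_dec t t0); lra).
  destruct (HDcauchy (/ (INR k + 1)) (conj (inv_succ_pos k) (inv_succ_le1 k))) as [N HN].
  destruct (Hfreq N) as [n [Hn Hcn]].
  exists N. intros m Hm.
  assert (HSn : dle (T (H0_approx k) S) (T (H0_approx k) (Dn n))).
  { apply triangle_function_dle; auto using H0_approx_in_Delta_plus.
    - intro; lra.
    - apply step_dle; auto. }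
  pose proof (HN m n Hm Hn t) as HNt. fold (H0_approx k) in HNt.
  pose proof (HSn t). lra.
Qed.

Lemma lower_limit_eventually_lt t eps : continuity_pt (lower_limit Dn) t -> 0 < eps ->
  exists N, forall n, (N <= n)%nat -> Dn n t < lower_limit Dn t + eps.
Proof.
  intros Hct He. set (F := lower_limit Dn). apply NNPP. intros Hnot.
  assert (Hfreq : forall N, exists n, (N <= n)%nat /\ F t + eps <= Dn n t).
  { intros N. apply NNPP. intros Hn. apply Hnot. exists N. intros n HNn.
    apply Rnot_le_lt. intros Hle. apply Hn. exists n; auto. }
  destruct (Hfreq 0%nat) as [n0 [_ Hn0]].
  pose proof (lower_limit_bounds Dn t) as HFt. fold F in HFt.
  destruct (Rle_dec t 0) as [Ht|Ht].
  { rewrite (Delta_plus_nonpos _ (HD n0) t Ht) in Hn0. lra. }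
  assert (HFe : F t + eps <= 1).
  { destruct (HD n0) as [_ [_ [Hb _]]]. specialize (Hb t). lra. }
  destruct (continuity_pt_elim F t Hct (eps / 2) ltac:(lra)) as [d [Hd Hdy]].
  destruct (frequently_ge_eventually_gt t (t + d / 4) (F t + eps) (eps / 4)
              ltac:(lra) ltac:(lra) ltac:(lra) Hfreq) as [N HN].
  assert (F t + eps - eps / 4 <= F (t + d / 2)).
  { apply lower_limit_ub. split; [lra|]. right. exists (t + d / 4). split; [lra|].
    exists N. intros n Hn. specialize (HN n Hn). lra. }
  specialize (Hdy (t + d / 2)). rewrite Rabs_right in Hdy by lra.
  specialize (Hdy ltac:(lra)). apply Rabs_def2 in Hdy. lra.
Qed.

Lemma lower_limit_weak_cv : weak_cv Dn (lower_limit Dn).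
Proof.
  intros t Hct eps He.
  destruct (lower_limit_eventually_gt Dn HD t eps He) as [N1 HN1].
  destruct (lower_limit_eventually_lt t eps Hct He) as [N2 HN2].
  exists (max N1 N2). intros n Hn.
  specialize (HN1 n ltac:(lia)). specialize (HN2 n ltac:(lia)).
  unfold R_dist. apply Rabs_def1; lra.
Qed.

End TCauchyLimit.

Lemma strictly_nested_intervals_common_point (A B : nat -> R) :
  (forall k, A k < A (S k)) -> (forall k, B (S k) < B k) -> (forall k, A k < B k) ->
  exists p, forall k, A k < p < B k.
Proof.
  intros HA HB HAB.
  assert (HAB' : forall k j, A k <= B j).
  { intros k j.
    pose proof (growing_prop A (max k j) k ltac:(intro i; apply Rlt_le, HA) ltac:(lia)).
    pose proof (decreasing_prop B j (max k j) ltac:(intro i; apply Rlt_le, HB) ltac:(lia)).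
    pose proof (HAB (max k j)). lra. }
  destruct (completeness (EUn A)) as [p [Hp1 Hp2]].
  - exists (B 0%nat). intros x [k ->]. apply HAB'.
  - exists (A 0%nat), 0%nat. reflexivity.
  - exists p. intros k. pose proof (HA k). pose proof (HB k). split.
    + enough (A (S k) <= p) by lra. apply Hp1. exists (S k). reflexivity.
    + enough (p <= B (S k)) by lra. apply Hp2. intros x [j ->]. apply HAB'.
Qed.

Section ContinuityPoints.
Variable g : R -> R.
Hypothesis g_mono : nondecreasing g.

(* Keep the half of [x, y] on which g increases least, shrunk to its middle half so that the
   nested intervals are strictly nested. *)
Definition bisect (ab : R * R) : R * R :=
  let x := fst ab in let y := snd ab in let m := (x + y) / 2 in
  if Rle_dec (g m - g x) (g y - g m) then ((3 * x + m) / 4, (x + 3 * m) / 4)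
  else ((3 * m + y) / 4, (m + 3 * y) / 4).

Lemma bisect_spec ab : fst ab < snd ab ->
  fst ab < fst (bisect ab) < snd (bisect ab) /\ snd (bisect ab) < snd ab /\
  g (snd (bisect ab)) - g (fst (bisect ab)) <= (g (snd ab) - g (fst ab)) / 2.
Proof.
  destruct ab as [x y]; simpl. intros Hxy. unfold bisect; simpl.
  set (m := (x + y) / 2). destruct (Rle_dec _ _) as [H|H]; simpl.
  - pose proof (g_mono x ((3 * x + m) / 4) ltac:(unfold m; lra)).
    pose proof (g_mono ((x + 3 * m) / 4) m ltac:(unfold m; lra)). unfold m in *. lra.
  - pose proof (g_mono m ((3 * m + y) / 4) ltac:(unfold m; lra)).
    pose proof (g_mono ((m + 3 * y) / 4) y ltac:(unfold m; lra)). unfold m in *. lra.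
Qed.

Lemma bisect_iter_spec a b : a < b -> forall k,
  fst (Nat.iter k bisect (a, b)) < snd (Nat.iter k bisect (a, b)) /\
  g (snd (Nat.iter k bisect (a, b))) - g (fst (Nat.iter k bisect (a, b)))
    <= (g b - g a) * (/ 2) ^ k.
Proof.
  intros Hab. induction k as [|k [IH1 IH2]]; simpl; [lra|].
  destruct (bisect_spec _ IH1) as [H1 [H2 H3]]. split; [lra|].
  apply (Rle_trans _ _ _ H3). lra.
Qed.

Lemma continuity_pt_of_small_oscillation p :
  (forall eps, 0 < eps -> exists u v, u < p < v /\ g v - g u < eps) -> continuity_pt g p.
Proof.
  intros Hosc. apply continuity_pt_intro. intros eps He.
  destruct (Hosc eps He) as [u [v [Huv Hguv]]].
  exists (Rmin (p - u) (v - p)). split; [apply Rmin_pos; lra|].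
  intros y Hy. pose proof (Rmin_l (p - u) (v - p)). pose proof (Rmin_r (p - u) (v - p)).
  apply Rabs_def2 in Hy.
  pose proof (g_mono u y ltac:(lra)). pose proof (g_mono y v ltac:(lra)).
  pose proof (g_mono u p ltac:(lra)). pose proof (g_mono p v ltac:(lra)).
  apply Rabs_def1; lra.
Qed.

Lemma exists_continuity_pt a b : a < b -> exists p, a < p < b /\ continuity_pt g p.
Proof.
  intros Hab. set (A k := fst (Nat.iter k bisect (a, b))).
  set (B k := snd (Nat.iter k bisect (a, b))).
  assert (HAB : forall k, A k < B k) by (intro k; apply (bisect_iter_spec a b Hab k)).
  assert (Hstep : forall k, A k < A (S k) /\ B (S k) < B k).
  { intro k. destruct (bisect_spec _ (HAB k)) as [H1 [H2 _]]. unfold A, B. simpl Nat.iter. lra. }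
  destruct (strictly_nested_intervals_common_point A B) as [p Hp];
    [intro k; apply Hstep|intro k; apply Hstep|exact HAB|].
  exists p. split; [exact (Hp 0%nat)|].
  apply continuity_pt_of_small_oscillation. intros eps He.
  set (M := g b - g a). assert (HM : 0 <= M) by (pose proof (g_mono a b ltac:(lra)); unfold M; lra).
  destruct (pow_lt_1_zero (/ 2) ltac:(rewrite Rabs_right; lra) (eps / (M + 1))
              ltac:(apply Rdiv_lt_0_compat; lra)) as [k Hk].
  specialize (Hk k (Nat.le_refl k)). rewrite Rabs_right in Hk by (apply Rle_ge, pow_le; lra).
  exists (A k), (B k). split; [apply Hp|].
  apply (Rle_lt_trans _ _ _ (proj2 (bisect_iter_spec a b Hab k))). fold M.
  apply (Rle_lt_trans _ (M * (eps / (M + 1)))).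
  - apply Rmult_le_compat_l; lra.
  - unfold Rdiv. apply (Rmult_lt_reg_r (M + 1)); [lra|].
    rewrite Rmult_assoc, Rmult_assoc, Rinv_l by lra. nra.
Qed.

End ContinuityPoints.

Lemma continuity_pt_sum_nondecreasing (g1 g2 : R -> R) p : nondecreasing g1 -> nondecreasing g2 ->
  continuity_pt (fun t => g1 t + g2 t) p -> continuity_pt g1 p.
Proof.
  intros H1 H2 Hc. apply continuity_pt_intro. intros eps He.
  destruct (continuity_pt_elim _ _ Hc eps He) as [d [Hd Hy]].
  exists d; split; [exact Hd|]. intros y Hyd. specialize (Hy y Hyd).
  apply Rabs_def2 in Hy. apply Rabs_def1.
  - destruct (Rle_dec y p) as [Hyp|Hyp].
    + pose proof (H1 y p Hyp). lra.
    + pose proof (H1 p y ltac:(lra)); pose proof (H2 p y ltac:(lra)). lra.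
  - destruct (Rle_dec y p) as [Hyp|Hyp].
    + pose proof (H1 y p Hyp); pose proof (H2 y p Hyp). lra.
    + pose proof (H1 p y ltac:(lra)). lra.
Qed.

Lemma exists_common_continuity_pt (g1 g2 : R -> R) a b :
  nondecreasing g1 -> nondecreasing g2 -> a < b ->
  exists p, a < p < b /\ continuity_pt g1 p /\ continuity_pt g2 p.
Proof.
  intros H1 H2 Hab.
  assert (Hsum : nondecreasing (fun t => g1 t + g2 t)).
  { intros s t Hst. pose proof (H1 s t Hst); pose proof (H2 s t Hst). lra. }
  destruct (exists_continuity_pt _ Hsum a b Hab) as [p [Hp Hc]].
  exists p. split; [exact Hp|]. split.
  - exact (continuity_pt_sum_nondecreasing g1 g2 p H1 H2 Hc).
  - apply (continuity_pt_sum_nondecreasing g2 g1 p H2 H1).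
    apply continuity_pt_intro. intros eps He.
    destruct (continuity_pt_elim _ _ Hc eps He) as [d [Hd Hy]].
    exists d. split; [exact Hd|]. intros y Hyd. specialize (Hy y Hyd).
    replace (g2 y + g1 y - (g2 p + g1 p)) with (g1 y + g2 y - (g1 p + g2 p)) by ring.
    exact Hy.
Qed.

Lemma dle_of_le_at_continuity_pts F L : nondecreasing F -> left_continuous F -> nondecreasing L ->
  (forall p, continuity_pt F p -> continuity_pt L p -> F p <= L p) -> dle F L.
Proof.
  intros HFm HFlc HLm Hp t. apply Rnot_lt_le. intros Hlt.
  destruct (HFlc t (F t - L t) ltac:(lra)) as [d [Hd Hs]].
  destruct (exists_common_continuity_pt F L (t - d) t HFm HLm ltac:(lra))
    as [p [Hpt [HcF HcL]]].
  specialize (Hs p Hpt). apply Rabs_def2 in Hs.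
  pose proof (Hp p HcF HcL). pose proof (HLm p t ltac:(lra)). lra.
Qed.

Lemma PM_Cauchy_eventually_gt {G : Type} (D : G -> G -> dfun) (a : nat -> G) t eps :
  PM_Cauchy D a -> 0 < t -> 0 < eps ->
  exists N, forall m n, (N <= m)%nat -> (N <= n)%nat -> 1 - eps < D (a m) (a n) t.
Proof.
  intros Ha Ht He. destruct (Ha t eps He) as [N HN]. exists N. intros m n Hm Hn.
  specialize (HN m n Hm Hn). unfold H0 in HN. destruct (Rle_dec t 0); [lra|].
  apply Rabs_def2 in HN. lra.
Qed.

Lemma PM_Cauchy_T_Cauchy G D T (a : nat -> G) : PM_space G D T -> PM_Cauchy D a ->
  forall x, T_Cauchy T (fun n => D (a n) x).
Proof.
  intros [HT [HDp [_ [_ HDtri]]]] Ha x d Hd.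
  destruct (PM_Cauchy_eventually_gt D a d d Ha (proj1 Hd) (proj1 Hd)) as [N HN].
  exists N. intros m n Hm Hn t.
  assert (Hstep : dle (step d (1 - d)) (D (a m) (a n))).
  { apply step_dle; [apply HDp|]. pose proof (HN m n Hm Hn). lra. }
  apply (Rle_trans _ (T (D (a m) (a n)) (D (a n) x) t)).
  - apply triangle_function_dle; auto; [apply step_in_Delta_plus; lra|intro; lra].
  - apply HDtri.
Qed.

Lemma weak_limit_prob_1_Lipschitz G D T (a : nat -> G) (f : G -> dfun) :
  PM_space G D T -> continuous_triangle T -> (forall x, in_Delta_plus (f x)) ->
  (forall x, weak_cv (fun n => D (a n) x) (f x)) -> prob_1_Lipschitz D T f.
Proof.
  intros [HT [HDp [_ [HDsym HDtri]]]] HTcont Hf Hcv x y.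
  pose proof HT as [Td [Tcomm _]].
  assert (HL : in_Delta_plus (T (D x y) (f y))) by (apply Td; auto).
  destruct HL as [HLm [HLlc _]].
  apply dle_of_le_at_continuity_pts; [exact HLm|exact HLlc|apply (Hf x)|].
  intros p HcL Hcf.
  pose proof (HTcont (fun n => D (a n) y) (fun _ => D y x) (f y) (D y x)
                (fun n => HDp _ _) (fun _ => HDp _ _) (Hf y) (HDp y x) (Hcv y)
                (weak_cv_const _)) as HcvT.
  rewrite (Tcomm (f y) (D y x) (Hf y) (HDp y x)), (HDsym y x) in HcvT.
  apply (Rle_cv_lim (Un := fun n => T (D (a n) y) (D x y) p) (Vn := fun n => D (a n) x p)).
  - intros n. rewrite (HDsym x y). apply HDtri.
  - apply HcvT, HcL.
  - apply Hcv, Hcf.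
Qed.

Lemma lower_limit_diag_weak_cv_H0 G D (a : nat -> G) :
  (forall p q, in_Delta_plus (D p q)) -> PM_Cauchy D a ->
  weak_cv (fun n => lower_limit (fun m => D (a m) (a n))) H0.
Proof.
  intros HDp Ha t _ eps He. unfold R_dist, H0. destruct (Rle_dec t 0) as [Ht|Ht].
  - exists 0%nat. intros n _.
    rewrite (Delta_plus_nonpos _ (lower_limit_in_Delta_plus _ (fun m => HDp _ _)) t Ht).
    rewrite Rminus_diag, Rabs_R0. exact He.
  - destruct (PM_Cauchy_eventually_gt D a (t / 2) (eps / 2) Ha ltac:(lra) ltac:(lra))
      as [N HN].
    exists N. intros n Hn.
    assert (1 - eps / 2 <= lower_limit (fun m => D (a m) (a n)) t).
    { apply lower_limit_ub. split; [lra|]. right. exists (t / 2). split; [lra|].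
      exists N. intros m Hm. pose proof (HN m n Hm Hn). lra. }
    pose proof (lower_limit_bounds (fun m => D (a m) (a n)) t).
    apply Rabs_def1; lra.
Qed.

Theorem mainTheorem9 (G : Type) (D : G -> G -> dfun) (T : dfun -> dfun -> dfun)
  (HPM : PM_space G D T) (Hcont : continuous_triangle T)
  (a : nat -> G) (Ha : PM_Cauchy D a) :
  exists f : G -> dfun,
    (forall x, in_Delta_plus (f x)) /\
    prob_1_Lipschitz D T f /\
    (forall x, weak_cv (fun n => D (a n) x) (f x)) /\
    weak_cv (fun n => f (a n)) H0.
Proof.
  pose proof HPM as [HT [HDp _]].
  set (f x := lower_limit (fun n => D (a n) x)).
  assert (Hf : forall x, in_Delta_plus (f x)).
  { intro x. apply lower_limit_in_Delta_plus. intro n. apply HDp. }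
  assert (Hcv : forall x, weak_cv (fun n => D (a n) x) (f x)).
  { intro x. apply (lower_limit_weak_cv T HT Hcont); [intro n; apply HDp|].
    exact (PM_Cauchy_T_Cauchy G D T a HPM Ha x). }
  exists f. split; [exact Hf|]. split; [|split; [exact Hcv|]].
  - exact (weak_limit_prob_1_Lipschitz G D T a f HPM Hcont Hf Hcv).
  - exact (lower_limit_diag_weak_cv_H0 G D a HDp Ha).
Qed.
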